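(* Let $P\in\mathbb{O}P^2$ and let $Z\in T^{\mathbb{C}}_P\mathbb{O}P^2$ be isotropic, i.e. $\operatorname{tr}(Z\circ Z)=0$. Then the complex-linear endomorphism $\hat Z$ of $\mathfrak{h}^0_3(\mathbb{O})^{\mathbb{C}}$ defined by $$\hat Z(X)=-4\,Z\circ X+4\,Z\circ(P\circ X)+4\,P\circ(Z\circ X)$$ is nilpotent with nilorder $r\le 5$ (i.e. $\hat Z^5=0$).
   Context: $\mathfrak{h}_3(\mathbb{O})$ is the real vector space of hermitian $3\times3$ octonionic matrices with Jordan product $a\circ b=\frac12(ab+ba)$, extended complex-bilinearly to the complexification; $\mathfrak{h}^0_3(\mathbb{O})$ is the subspace of traceless matrices. $\mathbb{O}P^2=\{P\in\mathfrak{h}_3(\mathbb{O}):P\circ P=P,\ \operatorname{tr}P=1\}$, $T_P\mathbb{O}P^2=\{Z\in\mathfrak{h}_3(\mathbb{O}):2P\circ Z=Z\}$ and $T^{\mathbb{C}}_P\mathbb{O}P^2$ is its complexification. (For real $Z$, $\hat Z$ is the derivative in direction $Z$ of the orthogonal projection onto the $10$-dimensional subspace $V_P\subset\mathfrak{h}^0_3(\mathbb{O})$ corresponding to $P$, mapping $V_P\to V_P^\perp$ and $V_P^\perp\to V_P$.) The nilorder is the least $r$ with $\hat Z^r=0$. *)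

(* The real case is K = R
   (R : realType), the complexification is K = R[i]; complex scalars act
   componentwise and octonion conjugation is complex-linear, so
   h_3(O)^C = hermitian 3x3 matrices over O (x) C = octonions over R[i]. *)
From HB Require Import structures.
From mathcomp Require Import all_boot all_order all_algebra.
From mathcomp Require Import reals.
From mathcomp.real_closed Require Import complex.

Set Implicit Arguments.
Unset Strict Implicit.
Unset Printing Implicit Defensive.
Import GRing.Theory.
Local Open Scope ring_scope.

Section Octonions.
Variable K : comPzRingType.

Record quat := Quat { q0 : K; q1 : K; q2 : K; q3 : K }.

Definition qadd (p q : quat) :=
  Quat (q0 p + q0 q) (q1 p + q1 q) (q2 p + q2 q) (q3 p + q3 q).
Definition qopp (p : quat) := Quat (- q0 p) (- q1 p) (- q2 p) (- q3 p).
Definition qscale (k : K) (p : quat) :=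
  Quat (k * q0 p) (k * q1 p) (k * q2 p) (k * q3 p).
Definition qconj (p : quat) := Quat (q0 p) (- q1 p) (- q2 p) (- q3 p).
Definition qzero := Quat 0 0 0 0.
Definition qone := Quat 1 0 0 0.
Definition qmul (p q : quat) :=
  Quat (q0 p * q0 q - q1 p * q1 q - q2 p * q2 q - q3 p * q3 q)
       (q0 p * q1 q + q1 p * q0 q + q2 p * q3 q - q3 p * q2 q)
       (q0 p * q2 q - q1 p * q3 q + q2 p * q0 q + q3 p * q1 q)
       (q0 p * q3 q + q1 p * q2 q - q2 p * q1 q + q3 p * q0 q).

(* octonions (a, b) = a + b l, a b quaternions *)
Record oct := Oct { ofst : quat; osnd : quat }.

Definition oadd (x y : oct) := Oct (qadd (ofst x) (ofst y)) (qadd (osnd x) (osnd y)).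
Definition oopp (x : oct) := Oct (qopp (ofst x)) (qopp (osnd x)).
Definition oscale (k : K) (x : oct) := Oct (qscale k (ofst x)) (qscale k (osnd x)).
Definition oconj (x : oct) := Oct (qconj (ofst x)) (qopp (osnd x)).
Definition ozero := Oct qzero qzero.
Definition oone := Oct qone qzero.
(* Cayley-Dickson: (a,b)(c,d) = (ac - d^* b, da + b c^* ) *)
Definition omul (x y : oct) :=
  Oct (qadd (qmul (ofst x) (ofst y)) (qopp (qmul (qconj (osnd y)) (osnd x))))
      (qadd (qmul (osnd y) (ofst x)) (qmul (osnd x) (qconj (ofst y)))).

Definition omat := 'M[oct]_3.

Definition i0 : 'I_3 := @Ordinal 3 0 isT.
Definition i1 : 'I_3 := @Ordinal 3 1 isT.
Definition i2 : 'I_3 := @Ordinal 3 2 isT.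

Definition madd (A B : omat) : omat := \matrix_(i, j) oadd (A i j) (B i j).
Definition mscale (k : K) (A : omat) : omat := \matrix_(i, j) oscale k (A i j).
Definition mzero : omat := \matrix_(i, j) ozero.
Definition mmul (A B : omat) : omat :=
  \matrix_(i, j) oadd (omul (A i i0) (B i0 j))
                      (oadd (omul (A i i1) (B i1 j)) (omul (A i i2) (B i2 j))).
(* trace (an octonion; for hermitian matrices it is a scalar) *)
Definition mtr (A : omat) : oct := oadd (A i0 i0) (oadd (A i1 i1) (A i2 i2)).
Definition hermitian (A : omat) : Prop := forall i j, A i j = oconj (A j i).

End Octonions.

Arguments qzero {K}. Arguments qone {K}. Arguments ozero {K}. Arguments oone {K}.
Arguments mzero {K}.

Definition jordan (K : fieldType) (A B : omat K) : omat K :=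
  mscale (2%:R^-1) (madd (mmul A B) (mmul B A)).

Definition qmap (K L : comPzRingType) (f : K -> L) (p : quat K) : quat L :=
  Quat (f (q0 p)) (f (q1 p)) (f (q2 p)) (f (q3 p)).
Definition omap (K L : comPzRingType) (f : K -> L) (x : oct K) : oct L :=
  Oct (qmap f (ofst x)) (qmap f (osnd x)).
Definition mmap (K L : comPzRingType) (f : K -> L) (A : omat K) : omat L :=
  \matrix_(i, j) omap f (A i j).

Definition RtoC (R : realType) (x : R) : R[i] := Complex x 0.
Definition complexify (R : realType) (A : omat R) : omat R[i] := mmap (@RtoC R) A.

Definition OP2 (R : realType) (P : omat R) : Prop :=
  hermitian P /\ jordan P P = P /\ mtr P = oone.

Definition in_TC (R : realType) (P : omat R) (Z : omat R[i]) : Prop :=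
  hermitian Z /\ mscale 2%:R (jordan (complexify P) Z) = Z.

Definition in_h03C (R : realType) (X : omat R[i]) : Prop :=
  hermitian X /\ mtr X = ozero.

Definition Zhat (R : realType) (P : omat R) (Z : omat R[i]) (X : omat R[i])
  : omat R[i] :=
  let Pc := complexify P in
  madd (mscale (- 4%:R) (jordan Z X))
       (madd (mscale 4%:R (jordan Z (jordan Pc X)))
             (mscale 4%:R (jordan Pc (jordan Z X)))).

(* Write a hermitian octonionic 3x3 matrix through its 27 coordinates, let
   J x y = xy + yx be twice the Jordan product and T the trace.  The octonions
   enter only through the adjoint identity of the Albert algebra,
   U_x y = T(x o y) x - x^# # y with # the Freudenthal cross product, which is
   checked by a coordinate computation and then polarized.  With e = P, z = Z,
   w = J z z and L = J z, the hypotheses give e # z = 0, and the polarized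
   identity at (e, z) turns Zhat = L J_e + J_e L - 2 L into
   Zhat y = T(J e y) z + T(J z y) e - L y.  At (z, z) it gives J z w = 0 and
   J w w = 0, at (w, w) it gives J w (J w y) = T(J w y) w, and together these
   force L^5 = 0.  The rank-two part of Zhat vanishes on the vectors that
   occur, so Zhat^3 = -L^3 and Zhat L^3 = -L^4, whence Zhat^5 = -L^5 = 0. *)
From Pilot Require Import Defs.
From HB Require Import structures.
From mathcomp Require Import all_boot all_order all_algebra.
From mathcomp Require Import reals.
From mathcomp.real_closed Require Import complex.
From mathcomp Require Import ring.
Set Implicit Arguments. Unset Strict Implicit. Unset Printing Implicit Defensive.
Import GRing.Theory Num.Theory.
Local Open Scope ring_scope.

(* A K-linear identity between vectors of V holds as soon as it holds in the
   square-zero extension K (+) V, a commutative ring in which [ring] applies. *)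
Section TrivialExtension.
Variables (K : comNzRingType) (V : lmodType K).

Definition triv_ext := (K * V)%type.
HB.instance Definition _ := GRing.Zmodule.on triv_ext.

Definition triv_mul (x y : triv_ext) : triv_ext := (x.1 * y.1, x.1 *: y.2 + y.1 *: x.2).

Lemma triv_mulA : associative triv_mul.
Proof.
move=> [a u] [b v] [c w]; rewrite /triv_mul /=; congr pair; first by rewrite mulrA.
rewrite !scalerDr !scalerA addrA [c * a]mulrC [c * b]mulrC -addrA [X in _ + X]addrC addrA.
by rewrite [a * c]mulrC [b * c]mulrC.
Qed.

Lemma triv_mulC : commutative triv_mul.
Proof. by move=> [a u] [b v]; rewrite /triv_mul /= mulrC addrC. Qed.

Lemma triv_mul1 : left_id (1, 0) triv_mul.
Proof. by move=> [a u]; rewrite /triv_mul /= mul1r scale1r scaler0 addr0. Qed.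

Lemma triv_mulDl : left_distributive triv_mul +%R.
Proof.
move=> [a u] [b v] [c w]; rewrite /triv_mul /=; congr pair; first by rewrite mulrDl.
by rewrite scalerDl scalerDr addrACA.
Qed.

Lemma triv_one_neq0 : (1, 0) != 0 :> triv_ext.
Proof. by apply/eqP => -[] /eqP; rewrite oner_eq0. Qed.

HB.instance Definition _ := GRing.Zmodule_isComNzRing.Build triv_ext
  triv_mulA triv_mulC triv_mul1 triv_mulDl triv_one_neq0.

Definition triv_scalar (k : K) : triv_ext := (k, 0).

Lemma triv_scalar_is_zmod_morphism : zmod_morphism triv_scalar.
Proof. by move=> a b; rewrite /triv_scalar; congr pair; rewrite subr0. Qed.

Lemma triv_scalar_is_monoid_morphism : monoid_morphism triv_scalar.
Proof.
by split=> // a b; rewrite /triv_scalar /GRing.mul /= /triv_mul /= !scaler0 addr0.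
Qed.

HB.instance Definition _ := GRing.isZmodMorphism.Build K triv_ext triv_scalar
  triv_scalar_is_zmod_morphism.
HB.instance Definition _ := GRing.isMonoidMorphism.Build K triv_ext triv_scalar
  triv_scalar_is_monoid_morphism.

Definition triv_vec (v : V) : triv_ext := (0, v).

Lemma triv_vec_inj : injective triv_vec. Proof. by move=> u v []. Qed.

Lemma triv_vecD u v : triv_vec (u + v) = triv_vec u + triv_vec v.
Proof. by rewrite /triv_vec; congr pair; rewrite addr0. Qed.

Lemma triv_vecN u : triv_vec (- u) = - triv_vec u.
Proof. by rewrite /triv_vec; congr pair; rewrite oppr0. Qed.

Lemma triv_vecZ k u : triv_vec (k *: u) = triv_scalar k * triv_vec u.
Proof. by rewrite /triv_vec /triv_scalar /GRing.mul /= /triv_mul /= mulr0 scaler0 addr0. Qed.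

Lemma triv_vec0 : triv_vec 0 = 0. Proof. by []. Qed.

Definition triv_vecE := (triv_vecD, triv_vecN, triv_vecZ, triv_vec0).

End TrivialExtension.

Ltac module_ring := apply: triv_vec_inj; rewrite !triv_vecE; ring.

Lemma eq_of_subZ (K : pzRingType) (U : lmodType K) (A B X Y : U) (c : K) :
  A = B -> X - Y = c *: (A - B) -> X = Y.
Proof. by move=> ->; rewrite subrr scaler0 => /eqP; rewrite subr_eq0 => /eqP. Qed.

Lemma eq_of_subM (K : pzRingType) (a b x y c : K) :
  a = b -> x - y = c * (a - b) -> x = y.
Proof. by move=> ->; rewrite subrr mulr0 => /eqP; rewrite subr_eq0 => /eqP. Qed.

(* Twice the Freudenthal cross product x # w, written for the doubled product J;
   locked so that rewriting with its bilinearity cannot unfold an inner fcross. *)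
Fact fcross_key : unit. Proof. by []. Qed.
Definition fcross (K : pzRingType) (V : lmodType K) (J : V -> V -> V) (T : V -> K)
    (one : V) (x w : V) : V :=
  locked_with fcross_key
    (2 *: J x w - (2 * T x) *: w - (2 * T w) *: x + (2 * T x * T w - T (J x w)) *: one).

Lemma fcrossE (K : pzRingType) (V : lmodType K) (J : V -> V -> V) (T : V -> K) one x w :
  fcross J T one x w
  = 2 *: J x w - (2 * T x) *: w - (2 * T w) *: x + (2 * T x * T w - T (J x w)) *: one.
Proof. exact: unlock. Qed.

Definition bilinE := (linearDl, linearDr, linearNl, linearNr, linearZl, linearZr,
  linear0l, linear0r, linearD, linearN, linear0, scalarZ).

Section CrossExpansion.
Variables (K : comNzRingType) (V : lmodType K).
Variables (J : {bilinear V -> V -> V}) (T : {scalar V}) (one : V).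
Hypotheses (J_one : forall y, J one y = 2 *: y) (T_one : T one = 3).

Lemma fcross_fcross x w y :
  fcross J T one (fcross J T one x w) y =
    4 *: J (J x w) y - (4 * T x) *: J w y - (4 * T w) *: J x y
    + (2 * (2 * T x * T w - T (J x w))) *: y - (4 * T y) *: J x w
    + (4 * T y * T x) *: w + (4 * T y * T w) *: x
    + (- 2 * T y * (2 * T x * T w - T (J x w)) - 2 * T (J (J x w) y)
       + 2 * T x * T (J w y) + 2 * T w * T (J x y)) *: one.
Proof. by rewrite !fcrossE !bilinE /= J_one !bilinE /= T_one; module_ring. Qed.

End CrossExpansion.

Section CubicJordan.
Variables (K : fieldType) (V : lmodType K).
Variables (J : {bilinear V -> V -> V}) (T : {scalar V}) (one : V).
Hypothesis J_comm : forall x y, J x y = J y x.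
Hypothesis T_one : T one = 3.
Hypothesis T_assoc : forall x y w, T (J (J x y) w) = T (J x (J y w)).
Local Notation cross := (fcross J T one).
Hypothesis J_adjoint : forall x y,
  2 *: (2 *: J x (J x y) - J (J x x) y) = (4 * T (J x y)) *: x - cross (cross x x) y.
Hypotheses (two_neq0 : (2 : K) != 0) (three_neq0 : (3 : K) != 0).

Lemma fcrossC x w : cross x w = cross w x.
Proof. by rewrite !fcrossE J_comm; module_ring. Qed.

Lemma fcrossDl x x' w : cross (x + x') w = cross x w + cross x' w.
Proof. by rewrite !fcrossE !bilinE /=; module_ring. Qed.

Lemma fcrossDr x w w' : cross x (w + w') = cross x w + cross x w'.
Proof. by rewrite !(fcrossC x) fcrossDl. Qed.

Lemma fcrossZl k x y : cross (k *: x) y = k *: cross x y.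
Proof. by rewrite !fcrossE !bilinE /=; module_ring. Qed.

Lemma fcross0l y : cross 0 y = 0.
Proof. by rewrite !fcrossE !bilinE /=; module_ring. Qed.

Lemma J_adjoint_polar x w y :
  2 *: (J x (J w y) + J w (J x y) - J (J x w) y)
  = (2 * T (J x y)) *: w + (2 * T (J w y)) *: x - cross (cross x w) y.
Proof.
have := congr2 (fun a b => a - b) (J_adjoint (x + w) y)
  (congr2 +%R (J_adjoint x y) (J_adjoint w y)).
rewrite !(fcrossDl, fcrossDr) (fcrossC w x) !bilinE /= (J_comm w x) => H.
apply: (scalerI two_neq0).
by apply: (eq_of_subZ H (c := 1)); module_ring.
Qed.

Section Nilpotency.
Variables e z : V.
Hypotheses (J_ee : J e e = 2 *: e) (T_e : T e = 1).
Hypotheses (J_ez : J e z = z) (T_zz : T (J z z) = 0).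
Local Notation w := (J z z).

Definition zhat y := - (2 *: J z y) + J z (J e y) + J e (J z y).

Lemma T_z : T z = 0.
Proof.
have := T_assoc e e z; rewrite J_ee !bilinE !J_ez => H.
by apply: (eq_of_subM H (c := 1)); ring.
Qed.

Lemma fcross_ez : cross e z = 0.
Proof. by rewrite !fcrossE J_ez T_e T_z; module_ring. Qed.

Lemma J_e_J_z y : J e (J z y) + J z (J e y) = J z y + T (J e y) *: z + T (J z y) *: e.
Proof.
have := J_adjoint_polar e z y; rewrite fcross_ez fcross0l J_ez => H.
by apply: (scalerI two_neq0); apply: (eq_of_subZ H (c := 1)); module_ring.
Qed.

Lemma zhat_expand y : zhat y = T (J e y) *: z + T (J z y) *: e - J z y.
Proof. by apply: (eq_of_subZ (J_e_J_z y) (c := 1)); rewrite /zhat; module_ring. Qed.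

Lemma J_e_w : J e w = 0.
Proof.
have := J_e_J_z z; rewrite J_ez T_z T_zz => H.
by apply: (eq_of_subZ H (c := 1)); module_ring.
Qed.

Lemma T_J_z_w : T (J z w) = 0.
Proof. by rewrite -{1}J_ez (J_comm e) T_assoc J_e_w linear0r linear0. Qed.

Lemma J_z_J_z y :
  2 *: J z (J z y) = (2 * T (J z y)) *: z - J w y + (2 * T y) *: w + T (J w y) *: one.
Proof.
have fcross_zz : cross z z = 2 *: w by rewrite !fcrossE T_z T_zz; module_ring.
have := J_adjoint_polar z z y; rewrite fcross_zz fcrossZl fcrossE T_zz => H.
by apply: (scalerI two_neq0); apply: (eq_of_subZ H (c := 1)); module_ring.
Qed.

Lemma J_z_w : J z w = 0.
Proof.
have := J_z_J_z z; rewrite T_zz T_z (J_comm w z) T_J_z_w => H.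
by apply: (scalerI three_neq0); apply: (eq_of_subZ H (c := 1)); module_ring.
Qed.

Lemma J_w_w : J w w = 0.
Proof.
have := J_z_J_z w; rewrite T_J_z_w J_z_w linear0r T_zz => H.
have T_ww : T (J w w) = 0.
  have := congr1 T H; rewrite !bilinE T_one => HT.
  by apply: (mulfI two_neq0); apply: (eq_of_subM HT (c := -1)); ring.
by rewrite T_ww in H; apply: (eq_of_subZ H (c := 1)); module_ring.
Qed.

Lemma J_w_J_w y : J w (J w y) = T (J w y) *: w.
Proof.
have fcross_ww : cross w w = 0 by rewrite !fcrossE J_w_w T_zz; module_ring.
have := J_adjoint_polar w w y; rewrite fcross_ww fcross0l J_w_w linear0l => H.
apply: (scalerI two_neq0); apply: (scalerI two_neq0).
by apply: (eq_of_subZ H (c := 1)); module_ring.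
Qed.

Lemma T_J_w_J_z y : T (J w (J z y)) = 0.
Proof. by rewrite -T_assoc (J_comm w) J_z_w linear0l linear0. Qed.

Lemma J_z3 y :
  2 *: J z (J z (J z y)) = (2 * T (J w y)) *: z - J w (J z y) + (2 * T (J z y)) *: w.
Proof. by rewrite J_z_J_z -T_assoc T_J_w_J_z scale0r addr0. Qed.

Lemma T_J_z3 y : T (J z (J z (J z y))) = 0.
Proof. by rewrite -T_assoc T_J_w_J_z. Qed.

Lemma J_w_J_z3 y : J w (J z (J z (J z y))) = 0.
Proof.
have := congr1 (J w) (J_z3 y).
rewrite !bilinE /= (J_comm w z) J_z_w J_w_w J_w_J_w T_J_w_J_z => H.
by apply: (scalerI two_neq0); apply: (eq_of_subZ H (c := 1)); module_ring.
Qed.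

Lemma J_z5 y : J z (J z (J z (J z (J z y)))) = 0.
Proof.
by apply: (scalerI two_neq0); rewrite J_z3 T_J_w_J_z J_w_J_z3 T_J_z3; module_ring.
Qed.

Lemma zhat_is_linear : linear zhat.
Proof. by move=> a u v; rewrite /zhat !bilinE; module_ring. Qed.

HB.instance Definition _ := GRing.isLinear.Build K V V *:%R zhat zhat_is_linear.

Lemma T_J_e_J_z y : T (J e (J z y)) = T (J z y).
Proof. by rewrite -T_assoc J_ez. Qed.

Lemma zhat_J_z y : zhat (J z y) = T (J z y) *: z + T (J w y) *: e - J z (J z y).
Proof. by rewrite zhat_expand T_J_e_J_z -T_assoc. Qed.

Lemma zhat_J_z3 y : zhat (J z (J z (J z y))) = - J z (J z (J z (J z y))).
Proof. by rewrite zhat_J_z T_J_z3 T_J_w_J_z !scale0r !add0r. Qed.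

Lemma zhat_z : zhat z = - w.
Proof. by rewrite zhat_expand J_ez T_z T_zz; module_ring. Qed.

Lemma zhat_e : zhat e = z.
Proof. by rewrite zhat_expand J_ee (J_comm z) J_ez scalarZ T_e T_z; module_ring. Qed.

Lemma zhat_w : zhat w = 0.
Proof. by rewrite zhat_expand J_e_w T_J_z_w J_z_w linear0; module_ring. Qed.

Lemma zhat2 y : zhat (zhat y) = J z (J z y) - T (J e y) *: w - T (J w y) *: e.
Proof.
rewrite [zhat y]zhat_expand linearB linearD !linearZ /= zhat_z zhat_e zhat_J_z.
by module_ring.
Qed.

Lemma zhat3 y : zhat (zhat (zhat y)) = - J z (J z (J z y)).
Proof.
rewrite [zhat (zhat y)]zhat2 !linearB !linearZ /= zhat_w zhat_e zhat_J_z.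
by rewrite -T_assoc T_J_w_J_z; module_ring.
Qed.

Lemma zhat_nilpotent y : iter 5 zhat y = 0.
Proof.
rewrite /= [zhat (zhat (zhat y))]zhat3 !linearN /= zhat_J_z3 linearN /= zhat_J_z3.
by rewrite J_z5 !oppr0.
Qed.

End Nilpotency.
End CubicJordan.

Section Herm3.
Variable K : comNzRingType.

Definition quat_tuple (p : quat K) := (q0 p, q1 p, q2 p, q3 p).
Definition tuple_quat (t : K * K * K * K) := let: (a, b, c, d) := t in Quat a b c d.
Lemma quat_tupleK : cancel quat_tuple tuple_quat. Proof. by case. Qed.
HB.instance Definition _ := Equality.copy (quat K) (can_type quat_tupleK).
HB.instance Definition _ := Choice.copy (quat K) (can_type quat_tupleK).

Definition oct_pair (x : oct K) := (ofst x, osnd x).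
Definition pair_oct (p : quat K * quat K) := Oct p.1 p.2.
Lemma oct_pairK : cancel oct_pair pair_oct. Proof. by case. Qed.
HB.instance Definition _ := Equality.copy (oct K) (can_type oct_pairK).
HB.instance Definition _ := Choice.copy (oct K) (can_type oct_pairK).

(* The hermitian matrix with diagonal (h00, h11, h22) and entries h01, h02, h12
   above the diagonal. *)
Record herm3 := Herm3 { h00 : K; h11 : K; h22 : K; h01 : oct K; h02 : oct K; h12 : oct K }.

Definition herm3_tuple (u : herm3) := (h00 u, h11 u, h22 u, h01 u, h02 u, h12 u).
Definition tuple_herm3 (t : K * K * K * oct K * oct K * oct K) :=
  let: (a, b, c, x, y, z) := t in Herm3 a b c x y z.
Lemma herm3_tupleK : cancel herm3_tuple tuple_herm3. Proof. by case. Qed.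
HB.instance Definition _ := Equality.copy herm3 (can_type herm3_tupleK).
HB.instance Definition _ := Choice.copy herm3 (can_type herm3_tupleK).

Definition hadd u v := Herm3 (h00 u + h00 v) (h11 u + h11 v) (h22 u + h22 v)
  (oadd (h01 u) (h01 v)) (oadd (h02 u) (h02 v)) (oadd (h12 u) (h12 v)).
Definition hopp u :=
  Herm3 (- h00 u) (- h11 u) (- h22 u) (oopp (h01 u)) (oopp (h02 u)) (oopp (h12 u)).
Definition hzero := Herm3 0 0 0 ozero ozero ozero.
Definition hscale (k : K) u := Herm3 (k * h00 u) (k * h11 u) (k * h22 u)
  (oscale k (h01 u)) (oscale k (h02 u)) (oscale k (h12 u)).

Definition oinner (x y : oct K) : K :=
  q0 (ofst x) * q0 (ofst y) + q1 (ofst x) * q1 (ofst y) + q2 (ofst x) * q2 (ofst y)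
  + q3 (ofst x) * q3 (ofst y) + q0 (osnd x) * q0 (osnd y) + q1 (osnd x) * q1 (osnd y)
  + q2 (osnd x) * q2 (osnd y) + q3 (osnd x) * q3 (osnd y).

(* The coordinates of A B + B A, i.e. twice the Jordan product: keeping the
   factor 2 makes every identity below integral. *)
Definition anticomm u v := Herm3
  (2 * (h00 u * h00 v + oinner (h01 u) (h01 v) + oinner (h02 u) (h02 v)))
  (2 * (h11 u * h11 v + oinner (h01 u) (h01 v) + oinner (h12 u) (h12 v)))
  (2 * (h22 u * h22 v + oinner (h02 u) (h02 v) + oinner (h12 u) (h12 v)))
  (oadd (oadd (oscale (h00 u + h11 u) (h01 v)) (oscale (h00 v + h11 v) (h01 u)))
        (oadd (omul (h02 u) (oconj (h12 v))) (omul (h02 v) (oconj (h12 u)))))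
  (oadd (oadd (oscale (h00 u + h22 u) (h02 v)) (oscale (h00 v + h22 v) (h02 u)))
        (oadd (omul (h01 u) (h12 v)) (omul (h01 v) (h12 u))))
  (oadd (oadd (oscale (h11 u + h22 u) (h12 v)) (oscale (h11 v + h22 v) (h12 u)))
        (oadd (omul (oconj (h01 u)) (h02 v)) (omul (oconj (h01 v)) (h02 u)))).

Definition htr u := h00 u + h11 u + h22 u.
Definition hone := Herm3 1 1 1 ozero ozero ozero.

Lemma quat_ext (a b c d a' b' c' d' : K) :
  a = a' -> b = b' -> c = c' -> d = d' -> Quat a b c d = Quat a' b' c' d'.
Proof. by move=> -> -> -> ->. Qed.

Lemma oct_ext (p q p' q' : quat K) : p = p' -> q = q' -> Oct p q = Oct p' q'.
Proof. by move=> -> ->. Qed.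

Lemma herm3_ext (a b c a' b' c' : K) (x y z x' y' z' : oct K) :
  a = a' -> b = b' -> c = c' -> x = x' -> y = y' -> z = z' ->
  Herm3 a b c x y z = Herm3 a' b' c' x' y' z'.
Proof. by move=> -> -> -> -> -> ->. Qed.

End Herm3.

Ltac herm3_destruct u :=
  case: u => ? ? ? [[? ? ? ?] [? ? ? ?]] [[? ? ? ?] [? ? ? ?]] [[? ? ? ?] [? ? ? ?]].

Ltac coord_ring :=
  cbv beta iota delta [anticomm oinner htr hone hadd hopp hzero hscale
    oadd oopp oscale oconj omul ozero qadd qopp qscale qconj qmul qzero
    h00 h11 h22 h01 h02 h12 ofst osnd q0 q1 q2 q3];
  (apply: herm3_ext || idtac); try (apply: oct_ext; apply: quat_ext); ring.

Section Herm3Algebra.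
Variable K : comNzRingType.
Local Notation herm3 := (herm3 K).
Local Notation hone := (hone K).

Lemma haddA : associative (@hadd K).
Proof. by move=> u v w; herm3_destruct u; herm3_destruct v; herm3_destruct w; coord_ring. Qed.
Lemma haddC : commutative (@hadd K).
Proof. by move=> u v; herm3_destruct u; herm3_destruct v; coord_ring. Qed.
Lemma hadd0 : left_id (hzero K) (@hadd K).
Proof. by move=> u; herm3_destruct u; coord_ring. Qed.
Lemma haddN : left_inverse (hzero K) (@hopp K) (@hadd K).
Proof. by move=> u; herm3_destruct u; coord_ring. Qed.
HB.instance Definition _ := GRing.isZmodule.Build herm3 haddA haddC hadd0 haddN.

Lemma hscaleA a b (u : herm3) : hscale a (hscale b u) = hscale (a * b) u.
Proof. by herm3_destruct u; coord_ring. Qed.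
Lemma hscale1 : left_id 1 (@hscale K).
Proof. by move=> u; herm3_destruct u; coord_ring. Qed.
Lemma hscaleDr : right_distributive (@hscale K) (@hadd K).
Proof. by move=> a u v; herm3_destruct u; herm3_destruct v; coord_ring. Qed.
Lemma hscaleDl (u : herm3) : {morph (@hscale K)^~ u : a b / a + b >-> hadd a b}.
Proof. by move=> a b; herm3_destruct u; coord_ring. Qed.
HB.instance Definition _ :=
  GRing.Zmodule_isLmodule.Build K herm3 hscaleA hscale1 hscaleDr hscaleDl.

Lemma herm3_addE (u v : herm3) : u + v = hadd u v. Proof. by []. Qed.
Lemma herm3_oppE (u : herm3) : - u = hopp u. Proof. by []. Qed.
Lemma herm3_zeroE : 0 = hzero K. Proof. by []. Qed.
Lemma herm3_scaleE k (u : herm3) : k *: u = hscale k u. Proof. by []. Qed.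
Definition herm3_opsE := (herm3_addE, herm3_oppE, herm3_zeroE, herm3_scaleE).

Lemma anticommC (u v : herm3) : anticomm u v = anticomm v u.
Proof. by herm3_destruct u; herm3_destruct v; coord_ring. Qed.

Lemma anticomm_is_linear (u : herm3) : linear (anticomm u).
Proof.
move=> a v w; rewrite !herm3_opsE.
by herm3_destruct u; herm3_destruct v; herm3_destruct w; coord_ring.
Qed.

Lemma anticomm_is_bilinear : bilinear_for *:%R *:%R (@anticomm K).
Proof.
split=> [v a x y|u]; last exact: anticomm_is_linear.
by rewrite !(anticommC _ v); apply: anticomm_is_linear.
Qed.

HB.instance Definition _ := bilinear_isBilinear.Build K herm3 herm3 herm3 *:%R *:%R
  (@anticomm K) anticomm_is_bilinear.

Lemma htr_is_scalar : scalar (@htr K).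
Proof. by move=> a u v; herm3_destruct u; herm3_destruct v; rewrite /htr /=; ring. Qed.

HB.instance Definition _ := GRing.isLinear.Build K herm3 K *%R (@htr K) htr_is_scalar.

Lemma anticomm_one (y : herm3) : anticomm hone y = 2 *: y.
Proof. by rewrite herm3_opsE; herm3_destruct y; coord_ring. Qed.

Lemma htr_one : htr hone = 3.
Proof. by rewrite /htr /=; ring. Qed.

Lemma htr_anticommA (u v w : herm3) :
  htr (anticomm (anticomm u v) w) = htr (anticomm u (anticomm v w)).
Proof. by herm3_destruct u; herm3_destruct v; herm3_destruct w; coord_ring. Qed.

(* Halved, and with each product of three matrices occurring once, to keep the
   coordinate computation small. *)
Lemma anticomm_adjoint_expanded (x y : herm3) :
  2 *: anticomm x (anticomm x y) + anticomm (anticomm x x) y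
  = (2 * htr (anticomm x y) - 4 * htr y * htr x) *: x + (4 * htr x) *: anticomm x y
    - (2 * htr x * htr x - htr (anticomm x x)) *: y + (2 * htr y) *: anticomm x x
    + (htr y * (2 * htr x * htr x - htr (anticomm x x)) + htr (anticomm (anticomm x x) y)
       - 2 * htr x * htr (anticomm x y)) *: hone.
Proof. by rewrite !herm3_opsE; herm3_destruct x; herm3_destruct y; coord_ring. Qed.

Lemma anticomm_adjoint (x y : herm3) :
  2 *: (2 *: anticomm x (anticomm x y) - anticomm (anticomm x x) y)
  = (4 * htr (anticomm x y)) *: x
    - fcross (@anticomm K) (@htr K) hone (fcross (@anticomm K) (@htr K) hone x x) y.
Proof.
rewrite (fcross_fcross anticomm_one htr_one).
by apply: (eq_of_subZ (anticomm_adjoint_expanded x y) (c := 2)); module_ring.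
Qed.

End Herm3Algebra.

Section Herm3Matrix.
Variable K : comNzRingType.
Local Notation herm3 := (herm3 K).

Definition oscalar (k : K) : oct K := Oct (Quat k 0 0 0) qzero.
Definition ore (x : oct K) : K := q0 (ofst x).

Definition herm3_entry (u : herm3) (i j : nat) : oct K :=
  match i, j with
  | 0, 0 => oscalar (h00 u) | 1, 1 => oscalar (h11 u) | 2, 2 => oscalar (h22 u)
  | 0, 1 => h01 u | 1, 0 => oconj (h01 u)
  | 0, 2 => h02 u | 2, 0 => oconj (h02 u)
  | 1, 2 => h12 u | 2, 1 => oconj (h12 u)
  | _, _ => ozero
  end.

Definition herm3_mx (u : herm3) : omat K := \matrix_(i, j) herm3_entry u i j.

Definition mx_herm3 (A : omat K) : herm3 :=
  Herm3 (ore (A i0 i0)) (ore (A i1 i1)) (ore (A i2 i2)) (A i0 i1) (A i0 i2) (A i1 i2).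

Lemma herm3_mxK : cancel herm3_mx mx_herm3.
Proof. by move=> u; herm3_destruct u; rewrite /mx_herm3 !mxE. Qed.

Lemma herm3_mx_inj : injective herm3_mx.
Proof. exact: can_inj herm3_mxK. Qed.

Lemma oscalar_inj : injective oscalar.
Proof. by move=> a b [] ->. Qed.

Ltac entrywise := apply/matrixP => -[[|[|[|//]]] ?] [[|[|[|//]]] ?]; rewrite !mxE.

Ltac entry_ring :=
  rewrite ?herm3_opsE; cbv beta iota delta [herm3_entry oscalar i0 i1 i2 nat_of_ord];
  coord_ring.

Lemma herm3_mx_anticomm (u v : herm3) :
  madd (mmul (herm3_mx u) (herm3_mx v)) (mmul (herm3_mx v) (herm3_mx u))
  = herm3_mx (anticomm u v).
Proof. by rewrite /madd /mmul; entrywise; herm3_destruct u; herm3_destruct v; entry_ring. Qed.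

Lemma herm3_mxD (u v : herm3) : madd (herm3_mx u) (herm3_mx v) = herm3_mx (u + v).
Proof. by rewrite /madd; entrywise; herm3_destruct u; herm3_destruct v; entry_ring. Qed.

Lemma herm3_mxZ k (u : herm3) : mscale k (herm3_mx u) = herm3_mx (k *: u).
Proof. by rewrite /mscale; entrywise; herm3_destruct u; entry_ring. Qed.

Lemma herm3_mx0 : herm3_mx 0 = mzero :> omat K.
Proof. by rewrite /mzero; entrywise; entry_ring. Qed.

Lemma mtr_herm3_mx (u : herm3) : mtr (herm3_mx u) = oscalar (htr u).
Proof. by rewrite /mtr !mxE; herm3_destruct u; entry_ring. Qed.

End Herm3Matrix.

Section Herm3MatrixField.
Variable K : fieldType.
Hypothesis two_neq0 : (2 : K) != 0.
Local Notation herm3 := (herm3 K).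

Lemma oconj_fixed_scalar (x : oct K) : oconj x = x -> oscalar (ore x) = x.
Proof.
have opp_fixed (a : K) : - a = a -> 0 = a.
  move=> Ha; apply: (mulfI two_neq0).
  by rewrite mulr0 mulr_natl mulr2n -{1}Ha addNr.
case: x => [[a b c d] [a' b' c' d']] [] /opp_fixed <- /opp_fixed <- /opp_fixed <-.
by move=> /opp_fixed <- /opp_fixed <- /opp_fixed <- /opp_fixed <-.
Qed.

Lemma mx_herm3K (A : omat K) : Defs.hermitian A -> herm3_mx (mx_herm3 A) = A.
Proof.
move=> A_herm; apply/matrixP => i j; rewrite mxE.
case: i j => -[|[|[|//]]] ? [[|[|[|//]]] ?] /=; rewrite ?oconj_fixed_scalar -?A_herm //;
  by congr (A _ _); apply: val_inj.
Qed.

Lemma jordan_herm3_mx (u v : herm3) :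
  jordan (herm3_mx u) (herm3_mx v) = herm3_mx (2^-1 *: anticomm u v).
Proof. by rewrite /jordan herm3_mx_anticomm herm3_mxZ. Qed.

Lemma jordan_herm3_mx_eq (u v w : herm3) :
  jordan (herm3_mx u) (herm3_mx v) = herm3_mx w -> anticomm u v = 2 *: w.
Proof. by rewrite jordan_herm3_mx => /herm3_mx_inj <-; rewrite scalerA divff // scale1r. Qed.

End Herm3MatrixField.

Section ChangeOfScalars.
Variables (K L : comNzRingType) (f : {rmorphism K -> L}).

Lemma qmapD p q : Defs.qmap f (qadd p q) = qadd (Defs.qmap f p) (Defs.qmap f q).
Proof. by case: p q => ? ? ? ? [? ? ? ?]; rewrite /Defs.qmap /qadd /= !rmorphD. Qed.
Lemma qmapN p : Defs.qmap f (qopp p) = qopp (Defs.qmap f p).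
Proof. by case: p => ? ? ? ?; rewrite /Defs.qmap /qopp /= !rmorphN. Qed.
Lemma qmap_conj p : Defs.qmap f (qconj p) = qconj (Defs.qmap f p).
Proof. by case: p => ? ? ? ?; rewrite /Defs.qmap /qconj /= !rmorphN. Qed.
Lemma qmapM p q : Defs.qmap f (qmul p q) = qmul (Defs.qmap f p) (Defs.qmap f q).
Proof. by case: p q => ? ? ? ? [? ? ? ?]; rewrite /Defs.qmap /qmul /= !(rmorphD, rmorphN, rmorphM). Qed.
Lemma qmapZ k p : Defs.qmap f (qscale k p) = qscale (f k) (Defs.qmap f p).
Proof. by case: p => ? ? ? ?; rewrite /Defs.qmap /qscale /= !rmorphM. Qed.

Lemma omapD x y : Defs.omap f (oadd x y) = oadd (Defs.omap f x) (Defs.omap f y).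
Proof. by rewrite /Defs.omap /oadd /= !qmapD. Qed.
Lemma omap_conj x : Defs.omap f (oconj x) = oconj (Defs.omap f x).
Proof. by rewrite /Defs.omap /oconj /= qmap_conj qmapN. Qed.
Lemma omapM x y : Defs.omap f (omul x y) = omul (Defs.omap f x) (Defs.omap f y).
Proof. by rewrite /Defs.omap /omul /= !(qmapD, qmapN, qmapM, qmap_conj). Qed.
Lemma omapZ k x : Defs.omap f (oscale k x) = oscale (f k) (Defs.omap f x).
Proof. by rewrite /Defs.omap /oscale /= !qmapZ. Qed.
Lemma omap1 : Defs.omap f oone = oone.
Proof. by rewrite /Defs.omap /Defs.qmap /= rmorph1 rmorph0. Qed.

Lemma mmap_hermitian A : Defs.hermitian A -> Defs.hermitian (mmap f A).
Proof. by move=> A_herm i j; rewrite /mmap !mxE A_herm omap_conj. Qed.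

Lemma mtr_mmap A : mtr (mmap f A) = Defs.omap f (mtr A).
Proof. by rewrite /mtr /mmap !mxE !omapD. Qed.

End ChangeOfScalars.

Lemma mmap_jordan (K L : fieldType) (f : {rmorphism K -> L}) (A B : omat K) :
  mmap f (jordan A B) = jordan (mmap f A) (mmap f B).
Proof.
apply/matrixP => i j; rewrite /jordan /mscale /madd /mmul /mmap !mxE.
by rewrite omapZ !omapD !omapM fmorphV rmorph_nat.
Qed.

HB.instance Definition _ (R : realType) := GRing.RMorphism.copy (@RtoC R) (real_complex R).

Lemma herm3_zhat_nilpotent (K : fieldType) (e z : herm3 K) :
  (2 : K) != 0 -> (3 : K) != 0 ->
  anticomm e e = 2 *: e -> htr e = 1 -> anticomm e z = z -> htr (anticomm z z) = 0 ->
  forall y, iter 5 (zhat (@anticomm K : {bilinear _ -> _ -> _}) e z) y = 0.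
Proof.
move=> *; exact: (zhat_nilpotent (@anticommC K) (@htr_one K) (@htr_anticommA K)
  (@anticomm_adjoint K)).
Qed.

Lemma iter_Zhat_herm3_mx (R : realType) (P : omat R) (Z : omat R[i]) (e z : herm3 R[i]) :
  complexify P = herm3_mx e -> Z = herm3_mx z -> forall n u,
  iter n (Zhat P Z) (herm3_mx u)
  = herm3_mx (iter n (zhat (@anticomm R[i] : {bilinear _ -> _ -> _}) e z) u).
Proof.
move=> Pe Zz n u; have two_neq0 : (2 : R[i]) != 0 by rewrite pnatr_eq0.
elim: n => //= n ->; rewrite /Zhat Pe Zz !jordan_herm3_mx // !herm3_mxZ !herm3_mxD.
congr herm3_mx; set v := iter n _ u.
rewrite /zhat !bilinE /= !scalerA -addrA -scaleNr.
rewrite -[anticomm z (anticomm e v)]scale1r -[anticomm e (anticomm z v)]scale1r.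
by congr (_ *: _ + (_ *: _ + _ *: _)); rewrite ?scale1r //; field.
Qed.

Theorem proposition2p3 (R : realType) (P : omat R) (Z : omat R[i]) :
  OP2 P -> in_TC P Z -> mtr (jordan Z Z) = ozero ->
  forall X : omat R[i], in_h03C X -> iter 5 (Zhat P Z) X = mzero.
Proof.
move=> [P_herm [PP trP]] [Z_herm PZ] Ziso X [X_herm _].
have [two_neq0 three_neq0] : (2 : R[i]) != 0 /\ (3 : R[i]) != 0 by rewrite !pnatr_eq0.
set e := mx_herm3 (complexify P); set z := mx_herm3 Z.
have Pe : complexify P = herm3_mx e by rewrite mx_herm3K //; apply: mmap_hermitian.
have Zz : Z = herm3_mx z by rewrite mx_herm3K.
have J_ee : anticomm e e = 2 *: e.
  by apply: jordan_herm3_mx_eq => //; rewrite -Pe /complexify -mmap_jordan PP.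
have T_e : htr e = 1.
  by apply: oscalar_inj; rewrite -mtr_herm3_mx -Pe /complexify mtr_mmap trP omap1.
have J_ez : anticomm e z = z.
  move: PZ; rewrite Pe Zz jordan_herm3_mx // herm3_mxZ => /herm3_mx_inj E.
  by rewrite -[RHS]E scalerA divff // scale1r.
have T_zz : htr (anticomm z z) = 0.
  move: Ziso; rewrite Zz jordan_herm3_mx // mtr_herm3_mx => /(oscalar_inj (K := R[i])).
  by rewrite scalarZ => /eqP; rewrite mulf_eq0 invr_eq0 (negbTE two_neq0) => /eqP.
rewrite -(mx_herm3K two_neq0 X_herm) (iter_Zhat_herm3_mx Pe Zz).
by rewrite (herm3_zhat_nilpotent two_neq0 three_neq0 J_ee T_e J_ez T_zz) herm3_mx0.
Qed.
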